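(* For every multi-type resource allocation problem and every profile $R$ of strict linear orders over bundles, the assignment $\mathrm{MPS}(R)$ is lexi-efficient.
   Context: Setting: $N=\{1,\dots,n\}$ agents; $M=D_1\cup\dots\cup D_p$ items with pairwise disjoint types, $|D_i|=n$, unit supply; bundles $\mathcal D=D_1\times\dots\times D_p$; each agent $j$ has a strict linear order $\succ_j$ on $\mathcal D$. An assignment is an $n\times|\mathcal D|$ matrix $(p_{j,x})$ with entries in $[0,1]$, rows summing to $1$, and $\sum_j\sum_{x\ni o}p_{j,x}=1$ for every item $o$. Lexicographic dominance: allocation $p$ lexicographically dominates $q$ w.r.t. $\succ$ if there is a bundle $x$ with $p_x>q_x$ and $p_y\ge q_y$ for all $y\succ x$. $P$ is lexi-efficient if there is no assignment $Q$ such that $Q_j$ lexicographically dominates $P_j$ w.r.t. $\succ_j$ for every agent $j$. MPS (multi-type probabilistic serial): items start with supply $1$. A bundle is available if all its items have positive remaining supply. Continuously in time, each agent eats her $\succ_j$-most-preferred available bundle at rate $1$, which means each item of that bundle is consumed at rate $1$ by her and $p_{j,x}$ grows at rate $1$; when an item's supply reaches $0$, it is exhausted and every bundle containing it becomes unavailable, and agents switch to their next most preferred available bundle. The process ends when all items are exhausted (at time $1$); the accumulated matrix $(p_{j,x})$ is $\mathrm{MPS}(R)$. *)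

From HB Require Import structures.
From mathcomp Require Import all_boot all_order all_algebra.
From mathcomp Require Import reals.
Set Implicit Arguments. Unset Strict Implicit. Unset Printing Implicit Defensive.
Import Order.TTheory GRing.Theory Num.Theory.
Local Open Scope ring_scope.

Section MPS.
Variables (R : realType) (n p : nat).

(* agents are 'I_n; types are 'I_p; type D_i consists of the n items (i, k),
   k : 'I_n; items of different types are distinct by construction. *)
Definition item := ('I_p * 'I_n)%type.
(* a bundle picks one item of each type: x i is the index of its item of type i *)
Definition bundle := {ffun 'I_p -> 'I_n}.
Definition in_bundle (o : item) (x : bundle) : bool := x o.1 == o.2.

Definition assignment := 'I_n -> bundle -> R.

Definition is_assignment (P : assignment) : Prop :=
  [/\ (forall j x, 0 <= P j x <= 1),
      (forall j, \sum_(x : bundle) P j x = 1) &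
      (forall o : item, \sum_(j < n) \sum_(x : bundle | in_bundle o x) P j x = 1)].

(* succ x y  means  x is strictly preferred to y *)
Definition strict_linear_order (T : finType) (succ : rel T) : Prop :=
  [/\ irreflexive succ, transitive succ & forall x y, x != y -> succ x y || succ y x].

Definition lexi_dominates (succ : rel bundle) (pa qa : bundle -> R) : Prop :=
  exists x, qa x < pa x /\ forall y, succ y x -> qa y <= pa y.

Definition lexi_efficient (succ : 'I_n -> rel bundle) (P : assignment) : Prop :=
  ~ exists Q : assignment, is_assignment Q /\
      forall j, lexi_dominates (succ j) (Q j) (P j).

Variable succ : 'I_n -> rel bundle.

Definition available (s : item -> R) (x : bundle) : bool :=
  [forall i, 0 < s (i, x i)].

Definition choice (s : item -> R) (j : 'I_n) : option bundle :=
  [pick x | available s x &&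
            [forall y, (available s y && (y != x)) ==> succ j x y]].

Definition rate (s : item -> R) (o : item) : nat :=
  count (fun j => if choice s j is Some x then in_bundle o x else false)
        (enum 'I_n).

(* length of the current phase: time until the next item is exhausted *)
Definition phase_length (s : item -> R) : R :=
  let ratios := [seq s o / (rate s o)%:R | o <- enum {: item} & (0 < rate s o)%N] in
  if ratios is r :: rs then foldr Num.min r rs else 0.

Definition mps_step (st : (item -> R) * assignment) : (item -> R) * assignment :=
  let: (s, P) := st in
  let d := phase_length s in
  ((fun o => s o - (rate s o)%:R * d),
   (fun j x => P j x + (if choice s j == Some x then d else 0))).

(* Each productive phase exhausts at least one item, so after #items = n*p
   phases all items are exhausted; further phases are no-ops. *)
Definition MPS : assignment :=
  (iter (n * p).+1 mps_step ((fun _ => 1), (fun _ _ => 0))).2.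

End MPS.

From HB Require Import structures.
From mathcomp Require Import all_boot all_order all_algebra.
From mathcomp Require Import reals ring.
Set Implicit Arguments. Unset Strict Implicit. Unset Printing Implicit Defensive.
Import Order.TTheory GRing.Theory Num.Theory.
Local Open Scope ring_scope.

(* Suppose an assignment Q lexicographically dominates MPS(R) for every
   agent k, with witness bundle x k: Q gives agent k strictly more of x k
   and at least as much of every bundle she prefers to x k.  Run MPS up to
   the first phase T at which some witness bundle x k0 becomes unavailable;
   some item o of x k0 is then exhausted.  Before T every agent k eats only
   bundles she weakly prefers to x k (x k is still available), so the whole
   unit of o is consumed by such bundles, and MPS gives at least total mass
   1 on the "upper contours" {(k, y) | o in y, y weakly preferred to x k}.
   But domination forces Q to put strictly more than MPS on these pairs,
   i.e. more than the unit supply of o: a contradiction. *)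

Lemma ltr_sum_one_strict (R : numDomainType) (I : finType) (P : pred I)
    (F G : I -> R) (i0 : I) :
  (forall i, P i -> F i <= G i) -> P i0 -> F i0 < G i0 ->
  \sum_(i | P i) F i < \sum_(i | P i) G i.
Proof.
move=> FleG Pi0 Flt; rewrite (bigD1 i0) //= [ltRHS](bigD1 i0) //=.
by apply: ltr_leD => //; apply: ler_sum => i /andP[Pi _]; apply: FleG.
Qed.

Lemma foldr_min_mem (R : numDomainType) (r : R) (rs : seq R) :
  foldr Num.min r rs \in r :: rs.
Proof.
elim: rs r => [|a rs IH] r /=; first by rewrite inE.
rewrite /Num.min; case: ifP => _; first by rewrite !inE eqxx orbT.
by move: (IH r); rewrite !inE => /orP[->|->]; rewrite ?orbT.
Qed.

Section UpperContour.
Variables (R : realType) (n p : nat) (succ : 'I_n -> rel (bundle n p)).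

Definition weakly_prefers (k : 'I_n) (y x : bundle n p) : bool :=
  (y == x) || succ k y x.

(* If Q dominates P agent by agent with witnesses x, then for any item o of a
   witness bundle, P puts total mass < 1 on the pairs (k, y) with o in y and
   y weakly preferred by k to x k: Q puts strictly more there, and Q gives at
   most the unit supply of o to those pairs. *)
Lemma upper_contour_mass_lt1 (P Q : assignment R n p) (x : 'I_n -> bundle n p)
    (k0 : 'I_n) (o : item n p) :
  is_assignment Q ->
  (forall k, P k (x k) < Q k (x k)) ->
  (forall k y, succ k y (x k) -> P k y <= Q k y) ->
  in_bundle o (x k0) ->
  \sum_(k < n) \sum_(y | in_bundle o y && weakly_prefers k y (x k)) P k y < 1.
Proof.
move=> [Q01 _ Qcol] Pltx PleQ ox0.
have PleQ_contour k y :
    in_bundle o y && weakly_prefers k y (x k) -> P k y <= Q k y.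
  by case/andP=> _ /orP[/eqP -> | /PleQ //]; apply/ltW.
apply: (lt_le_trans (y := \sum_(k < n)
    \sum_(y | in_bundle o y && weakly_prefers k y (x k)) Q k y)).
  apply: (@ltr_sum_one_strict _ _ _ _ _ k0) => // [k _|].
    by apply: ler_sum => y; apply: PleQ_contour.
  apply: (@ltr_sum_one_strict _ _ _ _ _ (x k0)) => // [y|].
    exact: PleQ_contour.
  by rewrite ox0 /weakly_prefers eqxx.
rewrite -(Qcol o); apply: ler_sum => k _.
rewrite [leRHS](bigID (fun y => weakly_prefers k y (x k))) /= lerDl.
by apply: sumr_ge0 => y _; case/andP: (Q01 k y).
Qed.

End UpperContour.

Section MPSRun.
Variables (R : realType) (n p : nat) (succ : 'I_n -> rel (bundle n p)).

Local Notation item := (item n p).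
Local Notation bundle := (bundle n p).

Lemma choiceP (s : item -> R) k y : choice succ s k = Some y ->
  available s y /\ forall z, available s z -> z != y -> succ k y z.
Proof.
rewrite /choice; case: pickP => // y' /andP[avy' /forallP best] [<-].
by split=> // z avz zy; move: (best z); rewrite avz zy.
Qed.

Lemma rate_pos (s : item -> R) o : (0 < rate succ s o)%N -> 0 < s o.
Proof.
rewrite /rate -has_count => /hasP[k _].
case E: (choice succ s k) => [x|] // ox.
have [/forallP avx _] := choiceP E.
by case: o ox => i io /eqP /= <-; apply: avx.
Qed.

Lemma rate_eaten (s : item -> R) o (d : R) : (rate succ s o)%:R * d =
  \sum_(k < n) \sum_(y | in_bundle o y)
     (if choice succ s k == Some y then d else 0).
Proof.
rewrite /rate -sum1_count big_enum_cond natr_sum mulr_suml big_mkcond /=.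
apply: eq_bigr => k _; case E: (choice succ s k) => [x|] /=; last first.
  by rewrite big1.
have other y : y != x -> (Some x == Some y) = false.
  by apply: contraNF => /eqP [->].
case ox: (in_bundle o x).
  rewrite mul1r (bigD1 x) //= eqxx big1 ?addr0 // => y /andP[_ yx].
  by rewrite other.
by rewrite big1 // => y oy; rewrite other //; apply: contraFneq ox => <-.
Qed.

Lemma phase_length_spec (s : item -> R) :
  (phase_length succ s = 0 /\ forall o, rate succ s o = 0%N) \/
  exists2 o, (0 < rate succ s o)%N &
             phase_length succ s = s o / (rate succ s o)%:R.
Proof.
rewrite /phase_length /=.
case E: [seq _ | _ <- _ & _] => [|r rs]; [left; split=> // o | right].
  apply/eqP; rewrite -leqn0 leqNgt; apply/negP => ro.
  suff : s o / (rate succ s o)%:R \in [::] by [].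
  by rewrite -E; apply: map_f; rewrite mem_filter ro mem_enum.
have := foldr_min_mem r rs; rewrite -E.
by case/mapP=> o; rewrite mem_filter => /andP[ro _] ->; exists o.
Qed.

Definition mps_state (t : nat) : (item -> R) * assignment R n p :=
  iter t (mps_step succ) ((fun _ => 1), (fun _ _ => 0)).
Definition supply (t : nat) : item -> R := (mps_state t).1.
Definition phase (t : nat) : R := phase_length succ (supply t).
Definition eats (t : nat) (k : 'I_n) (y : bundle) : R :=
  if choice succ (supply t) k == Some y then phase t else 0.

Lemma phase_ge0 t : 0 <= phase t.
Proof.
case: (phase_length_spec (supply t)) => [[pl0 _] | [o ro pl]].
  by rewrite /phase pl0.
by rewrite /phase pl divr_ge0 // ltW // rate_pos.
Qed.

Lemma eats_ge0 t k y : 0 <= eats t k y.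
Proof. by rewrite /eats; case: eqP => // _; apply: phase_ge0. Qed.

Lemma mps_stateS t : mps_state t.+1 =
  ((fun o => supply t o - (rate succ (supply t) o)%:R * phase t),
   (fun k y => (mps_state t).2 k y + eats t k y)).
Proof.
by rewrite /mps_state iterS /eats /phase /supply /mps_state; case: (iter _ _ _).
Qed.

Lemma supplyS t o :
  supply t.+1 o = supply t o - (rate succ (supply t) o)%:R * phase t.
Proof. by rewrite {1}/supply mps_stateS. Qed.

Lemma alloc_eats t k y : (mps_state t).2 k y = \sum_(u < t) eats u k y.
Proof.
elim: t => [|t IH]; first by rewrite big_ord0.
by rewrite big_ord_recr -IH mps_stateS.
Qed.

Lemma supply_spent t o :
  1 - supply t o = \sum_(u < t) (rate succ (supply u) o)%:R * phase u.
Proof.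
elim: t => [|t IH]; first by rewrite big_ord0 subrr.
rewrite supplyS big_ord_recr /= -IH; ring.
Qed.

Lemma supply_antimono t1 t2 o : (t1 <= t2)%N -> supply t2 o <= supply t1 o.
Proof.
elim: t2 => [|t2 IH]; first by rewrite leqn0 => /eqP ->.
rewrite leq_eqVlt => /orP[/eqP -> // | /IH le12].
apply: le_trans le12; rewrite supplyS gerBl.
by rewrite mulr_ge0 ?phase_ge0.
Qed.

Lemma available_antimono t1 t2 x :
  (t1 <= t2)%N -> available (supply t2) x -> available (supply t1) x.
Proof.
move=> le12 /forallP avx; apply/forallP => i.
exact: lt_le_trans (avx i) (supply_antimono _ le12).
Qed.

(* Before the first time all of x k are still available, agent k only ate
   bundles she weakly prefers to x k; hence the consumed part of any item o
   is bounded by MPS's mass on the upper contours of the x k. *)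
Lemma consumption_bound (x : 'I_n -> bundle) T o :
  (T <= (n * p).+1)%N ->
  (forall k u, (u < T)%N -> available (supply u) (x k)) ->
  1 - supply T o <=
  \sum_(k < n) \sum_(y | in_bundle o y && weakly_prefers succ k y (x k))
     MPS R succ k y.
Proof.
move=> leT avx; rewrite supply_spent.
under eq_bigr do rewrite rate_eaten.
rewrite exchange_big /=; apply: ler_sum => k _.
rewrite exchange_big /= (bigID (fun y => weakly_prefers succ k y (x k))) /=.
rewrite [X in _ + X]big1 ?addr0 => [|y /andP[_ not_pref]]; last first.
  apply: big1 => u _; case E: (choice succ (supply u) k) => [z|] //.
  case: eqP => // -[zy]; have [_ best] := choiceP E.
  move: not_pref; rewrite /weakly_prefers -zy.
  by case: eqVneq => //= xz; rewrite best ?avx // eq_sym.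
apply: ler_sum => y _.
have -> : MPS R succ k y = \sum_(u < (n * p).+1) eats u k y := alloc_eats (n * p).+1 k y.
rewrite (big_ord_widen _ (fun u => eats u k y) leT).
rewrite [leRHS](bigID (fun u : 'I_(n * p).+1 => (u < T)%N)) /= lerDl.
by apply: sumr_ge0 => u _; apply: eats_ge0.
Qed.

Hypothesis hsucc : forall k, strict_linear_order (succ k).

Lemma choice_exists (s : item -> R) k x :
  available s x -> exists y, choice succ s k = Some y.
Proof.
move=> avx; rewrite /choice; case: pickP => [y _|none]; first by exists y.
have [irr trans total] := hsucc k.
pose above y := #|[pred z | available s z && succ k z y]|.
case: (arg_minnP above avx) => y avy ymin; exfalso.
move/negP: (none y); apply; rewrite avy; apply/forallP => z.
apply/implyP => /andP[avz zy]; case/orP: (total _ _ zy) => // zy'.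
suff : (above z < above y)%N by rewrite ltnNge ymin.
apply: proper_card; apply/properP; split.
  by apply/subsetP => w; rewrite !inE => /andP[-> wz]; rewrite (trans _ _ _ wz zy').
by exists z; rewrite !inE ?avz ?zy' ?irr.
Qed.

Hypotheses (hn : (0 < n)%N) (hp : (0 < p)%N).

Lemma phase_exhausts t x : available (supply t) x ->
  exists o, 0 < supply t o /\ supply t.+1 o <= 0.
Proof.
move=> avx; have [y Ey] := choice_exists (Ordinal hn) avx.
have ry : (0 < rate succ (supply t) (Ordinal hp, y (Ordinal hp)))%N.
  rewrite /rate -has_count; apply/hasP; exists (Ordinal hn); rewrite ?mem_enum //.
  by rewrite Ey /in_bundle eqxx.
have [[_ rate0] | [o ro pl]] := phase_length_spec (supply t).
  by move: ry; rewrite rate0.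
exists o; split; first exact: rate_pos.
by rewrite supplyS /phase pl mulrC divfK ?subrr // pnatr_eq0 -lt0n.
Qed.

Lemma mps_terminates x : ~~ available (supply (n * p).+1) x.
Proof.
apply/negP => avx.
pose exhausted t := [set o : item | supply t o <= 0].
have grows t : (t < (n * p).+1)%N -> (#|exhausted t| < #|exhausted t.+1|)%N.
  move=> lt_t; have [o [pos ex]] := phase_exhausts (available_antimono (ltnW lt_t) avx).
  apply: proper_card; apply/properP; split.
    by apply/subsetP => o'; rewrite !inE; apply: le_trans (supply_antimono _ (leqnSn t)).
  by exists o; rewrite !inE // -ltNge.
have count_lb t : (t <= (n * p).+1)%N -> (t <= #|exhausted t|)%N.
  by elim: t => // t IH lt_t; apply: leq_ltn_trans (IH (ltnW lt_t)) (grows t lt_t).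
have := leq_trans (count_lb _ (leqnn _)) (max_card (mem (exhausted (n * p).+1))).
by rewrite card_prod !card_ord mulnC ltnn.
Qed.

Lemma first_exhaustion (x : 'I_n -> bundle) : exists T k0 (i : 'I_p),
  [/\ (T <= (n * p).+1)%N, supply T (i, x k0 i) <= 0 &
      forall k u, (u < T)%N -> available (supply u) (x k)].
Proof.
have gone_at_end : [exists k, ~~ available (supply (n * p).+1) (x k)].
  by apply/existsP; exists (Ordinal hn); apply: mps_terminates.
have ex : exists t, [exists k, ~~ available (supply t) (x k)].
  by exists (n * p).+1.
case: (ex_minnP ex) => T /existsP[k0 /forallPn[i i_out]].
move=> Tmin; exists T, k0, i; split; first exact: Tmin.
  by rewrite leNgt.
move=> k u ltuT; apply/negPn/negP => unav.
by have := Tmin u (introT existsP (ex_intro _ k unav)); rewrite leqNgt ltuT.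
Qed.

End MPSRun.

Theorem theorem4 (R : realType) (n p : nat) (hn : (0 < n)%N) (hp : (0 < p)%N)
    (succ : 'I_n -> rel (bundle n p))
    (hsucc : forall j, strict_linear_order (succ j)) :
  lexi_efficient succ (MPS R succ).
Proof.
move=> [Q [Qassign Qdom]].
have [x xdom] := fin_all_exists Qdom.
have [T [k0 [i [leT exhausted avx]]]] := first_exhaustion R hsucc hn hp x.
have consumed := consumption_bound (i, x k0 i) leT avx.
have upper := upper_contour_mass_lt1 Qassign (fun k => (xdom k).1)
  (fun k => (xdom k).2) (eqxx (x k0 i) : in_bundle (i, x k0 i) (x k0)).
have := le_lt_trans consumed upper.
by rewrite ltrBlDl ltrDr ltNge exhausted.
Qed.
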